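(* Let $F:\mathbb{R}^N\to\mathbb{R}\cup\{+\infty\}$ be convex, proper and lower semicontinuous, let $A\in C^1(\operatorname{dom}F;\mathbb{R}^M)$, and let $J(x):=\frac12\|A(x)\|^2+F(x)$. Let $z^0\in\operatorname{dom}F$ be such that Assumption 2.1 holds with constants $\mathfrak d, C>0$. Let $\beta>0$ and $\varepsilon\in(0,\beta)$, and let the relaxation parameter $w$ satisfy $$0<w\le\min\Big\{1,\ \frac{\mathfrak d}{\sqrt{2\beta^{-1}(J(z^0)-\inf F)}},\ \frac{\beta-\varepsilon}{2CA_{\max}}\Big\}$$ (the middle term being read as $+\infty$ if $J(z^0)=\inf F$). Generate $\{z^k\}_{k\ge0}$ by the relaxed inexact proximal Gauss–Newton iteration $z^{k+1}:=(1-w)z^k+w\tilde x^k$, where for each $k$ the point $\tilde x^k$ is an approximate minimiser of $\tilde J_k$ satisfying: 1. there exist $e^k\in\partial\tilde J_k(\tilde x^k)$ with $e^k\to0$ as $k\to\infty$; and 2. either $\tilde J_k(z^k)\ge\tilde J_k(\tilde x^k)$ and $\tilde x^k\ne z^k$, or $\tilde x^k=z^k$ and $0\in\partial\tilde J_k(z^k)$. Then: (i) $\{J(z^k)\}$ is monotonically decreasing and $J(z^k)\searrow L$ for some $L\in\mathbb{R}$; (ii) every accumulation point $\hat x$ of $\{z^k\}$ is Clarke-critical, i.e. $0\in\partial_C J(\hat x)$, and satisfies $J(\hat x)=L$; (iii) with $V_L:=\{\hat x\in\operatorname{dom}F\mid 0\in\partial_CJ(\hat x),\ J(\hat x)=L\}$,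 the iterates approach a single disjoint component of $V_L$: whenever $V_L=U_1\cup U_2$ with $U_1,U_2$ disjoint closed sets, all accumulation points of $\{z^k\}$ lie in the same $U_j$, and $\operatorname{dist}(z^k,U_j)\to0$ for that $j$.
   Context: Notation: $\operatorname{dom}F:=\{x\mid F(x)<\infty\}$; $B(y;r)$ is the open ball, $\operatorname{cl}B(y;r)$ its closure; $\operatorname{lev}_cJ:=\{x\mid J(x)\le c\}$. For $y\in\operatorname{dom}F$, $\nabla A(y)\in\mathbb{R}^{N\times M}$ denotes the transpose of the Jacobian of $A$ at $y$ (so $\nabla A(y)^*$ is the Jacobian), and $\tilde A_y(x):=A(y)+\nabla A(y)^*(x-y)$ is the linearisation of $A$ at $y$. Assumption 2.1 (for the given $z^0$): $\operatorname{lev}_{J(z^0)}J$ is bounded, $\inf F>-\infty$, $A_{\max}:=\sup_{z\in\operatorname{dom}F}\|A(z)\|<\infty$, and there are $\mathfrak d,C>0$ with $\|A(x)-\tilde A_y(x)\|\le C\|x-y\|^2$ for all $y\in\operatorname{lev}_{J(z^0)}J$ and $x\in\operatorname{cl}B(y;\mathfrak d)$. Subproblems: $J_k(x):=\frac12\|\tilde A_{z^k}(x)\|^2+F(x)$ and $\tilde J_k(x):=J_k(x)+\frac\beta2\|x-z^k\|^2$ (both convex); $\partial$ denotes the convex subdifferential. The Clarke subdifferential of $J$ at $x\in\operatorname{dom}F$ is $\partial_CJ(x)=\nabla A(x)A(x)+\partial F(x)$ (where $\nabla A(x)A(x)=\nabla(\frac12\|A\|^2)(x)$), and $x$ is called Clarke-critical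 if $0\in\partial_CJ(x)$. *)

From Stdlib Require Import Reals Lra.
From Stdlib Require Fin.
Open Scope R_scope.

Definition vec (n : nat) := Fin.t n -> R.

Fixpoint fsum (n : nat) : (Fin.t n -> R) -> R :=
  match n with
  | O => fun _ => 0
  | S m => fun f => f Fin.F1 + fsum m (fun i => f (Fin.FS i))
  end.

Definition vdot {n} (x y : vec n) : R := fsum n (fun i => x i * y i).
Definition vnorm {n} (x : vec n) : R := sqrt (vdot x x).
Definition vadd {n} (x y : vec n) : vec n := fun i => x i + y i.
Definition vsub {n} (x y : vec n) : vec n := fun i => x i - y i.
Definition vscal {n} (a : R) (x : vec n) : vec n := fun i => a * x i.
Definition vzero {n} : vec n := fun _ => 0.

(* Extended reals R ∪ {+oo}: None = +oo. *)
Definition ereal := option R.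
Definition ele (a b : ereal) : Prop :=
  match a, b with
  | _, None => True
  | None, Some _ => False
  | Some x, Some y => x <= y
  end.
Definition eplus (r : R) (a : ereal) : ereal := option_map (fun t => r + t) a.

Definition dom {n} (F : vec n -> ereal) (x : vec n) : Prop := F x <> None.

Definition proper {n} (F : vec n -> ereal) : Prop := exists x, dom F x.

Definition convex_fun {n} (F : vec n -> ereal) : Prop :=
  forall x y t a b, 0 <= t <= 1 -> F x = Some a -> F y = Some b ->
    exists c, F (vadd (vscal t x) (vscal (1 - t) y)) = Some c /\
              c <= t * a + (1 - t) * b.

Definition egt (a : ereal) (r : R) : Prop :=
  match a with None => True | Some x => r < x end.

Definition lsc {n} (F : vec n -> ereal) : Prop :=
  forall x r, egt (F x) r ->
    exists delta, 0 < delta /\ forall y, vnorm (vsub y x) < delta -> egt (F y) r.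

Definition subdiff {n} (G : vec n -> ereal) (x e : vec n) : Prop :=
  exists gx, G x = Some gx /\
    forall y, ele (Some (gx + vdot e (vsub y x))) (G y).

(* Jacobian data: DA y j = gradient of the j-th component of A at y,
   i.e. the j-th column of ∇A(y) ∈ R^{N×M}.  ∇A(y)^* h = (⟨DA y j, h⟩)_j. *)
Definition jac_apply {N M} (DA : vec N -> Fin.t M -> vec N) (y h : vec N) : vec M :=
  fun j => vdot (DA y j) h.

Definition jacT_apply {N M} (DA : vec N -> Fin.t M -> vec N) (y : vec N) (v : vec M)
  : vec N := fun i => fsum M (fun j => v j * DA y j i).

Definition C1_on {N M} (D : vec N -> Prop) (A : vec N -> vec M)
  (DA : vec N -> Fin.t M -> vec N) : Prop :=
  (forall y, D y -> forall eps, 0 < eps -> exists delta, 0 < delta /\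
     forall x, vnorm (vsub x y) < delta ->
       vnorm (vsub (vsub (A x) (A y)) (jac_apply DA y (vsub x y)))
         <= eps * vnorm (vsub x y)) /\
  (forall y, D y -> forall j eps, 0 < eps -> exists delta, 0 < delta /\
     forall y', D y' -> vnorm (vsub y' y) < delta ->
       vnorm (vsub (DA y' j) (DA y j)) < eps).

Definition linA {N M} (A : vec N -> vec M) (DA : vec N -> Fin.t M -> vec N)
  (y x : vec N) : vec M := vadd (A y) (jac_apply DA y (vsub x y)).

Definition Jfun {N M} (A : vec N -> vec M) (F : vec N -> ereal) (x : vec N) : ereal :=
  eplus (1/2 * vnorm (A x) ^ 2) (F x).

Definition Jtilde {N M} (A : vec N -> vec M) (DA : vec N -> Fin.t M -> vec N)
  (F : vec N -> ereal) (beta : R) (z x : vec N) : ereal :=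
  eplus (1/2 * vnorm (linA A DA z x) ^ 2 + beta / 2 * vnorm (vsub x z) ^ 2) (F x).

Definition clarke_critical {N M} (A : vec N -> vec M) (DA : vec N -> Fin.t M -> vec N)
  (F : vec N -> ereal) (x : vec N) : Prop :=
  exists g, subdiff F x g /\ vadd (jacT_apply DA x (A x)) g = vzero.

Definition accumulation_point {n} (z : nat -> vec n) (x : vec n) : Prop :=
  forall eps, 0 < eps -> forall K, exists k, (K <= k)%nat /\ vnorm (vsub (z k) x) < eps.

Definition closed_vset {n} (U : vec n -> Prop) : Prop :=
  forall x, (forall eps, 0 < eps -> exists u, U u /\ vnorm (vsub u x) < eps) -> U x.

Definition dist_to_zero {n} (z : nat -> vec n) (U : vec n -> Prop) : Prop :=
  forall eps, 0 < eps -> exists K, forall k, (K <= k)%nat ->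
    exists u, U u /\ vnorm (vsub (z k) u) < eps.

(* The relaxed step z^{k+1} = (1-w) z^k + w x^k moves at most w |x^k - z^k| <= d away from z^k,
   so the quadratic Taylor bound on A applies there; the resulting curvature error
   C w^2 |x^k - z^k|^2 A_max is dominated by the proximal term, which yields the sufficient decrease
   J(z^{k+1}) <= J(z^k) - (w eps / 2) |x^k - z^k|^2.  Hence J(z^k) decreases to some L, the iterates
   stay in the bounded level set, and |x^k - z^k| -> 0.  Along a subsequence converging to x, the
   approximate subgradient inequalities for J~_k pass to the limit (lower semicontinuity of F) and say
   that x minimises the prox-linear model centred at x itself, i.e. x is Clarke-critical; convexity of
   F along the relaxation then forces F(z^k) -> F(x), so J(x) = L.  Finally, consecutive iterates get
   arbitrarily close while two disjoint closed sets are uniformly separated near the bounded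
   iterates, so the sequence cannot switch from one piece of V_L to the other. *)

From Stdlib Require Import Reals Lra Lia FunctionalExtensionality ClassicalEpsilon Classical.
From Stdlib Require Fin.
Open Scope R_scope.

Ltac vec_ext := apply functional_extensionality; intros; unfold vsub, vadd, vscal, vzero; ring.

Lemma fsum_ext n (f g : Fin.t n -> R) : (forall i, f i = g i) -> fsum n f = fsum n g.
Proof.
  revert f g; induction n as [|n IH]; intros f g H; simpl; [reflexivity|].
  rewrite H; f_equal; apply IH; intros; apply H.
Qed.

Lemma fsum_plus n (f g : Fin.t n -> R) : fsum n (fun i => f i + g i) = fsum n f + fsum n g.
Proof.
  revert f g; induction n as [|n IH]; intros f g; simpl; [ring|].
  rewrite (IH (fun i => f (Fin.FS i)) (fun i => g (Fin.FS i))); ring.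
Qed.

Lemma fsum_scal n (c : R) (f : Fin.t n -> R) : fsum n (fun i => c * f i) = c * fsum n f.
Proof.
  revert f; induction n as [|n IH]; intros f; simpl; [ring|].
  rewrite (IH (fun i => f (Fin.FS i))); ring.
Qed.

Lemma fsum_zero n : fsum n (fun _ => 0) = 0.
Proof. induction n; simpl; [ring| rewrite IHn; ring]. Qed.

Lemma fsum_minus n (f g : Fin.t n -> R) : fsum n (fun i => f i - g i) = fsum n f - fsum n g.
Proof.
  revert f g; induction n as [|n IH]; intros f g; simpl; [ring|].
  rewrite (IH (fun i => f (Fin.FS i)) (fun i => g (Fin.FS i))); ring.
Qed.

Lemma fsum_le n (f g : Fin.t n -> R) : (forall i, f i <= g i) -> fsum n f <= fsum n g.
Proof.
  revert f g; induction n as [|n IH]; intros f g H; simpl; [lra|].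
  specialize (IH (fun i => f (Fin.FS i)) (fun i => g (Fin.FS i)) (fun i => H _)).
  specialize (H Fin.F1); lra.
Qed.

Lemma fsum_nonneg n (f : Fin.t n -> R) : (forall i, 0 <= f i) -> 0 <= fsum n f.
Proof. intros H. rewrite <- (fsum_zero n). apply fsum_le; auto. Qed.

Lemma fsum_swap n m (h : Fin.t n -> Fin.t m -> R) :
  fsum n (fun i => fsum m (fun j => h i j)) = fsum m (fun j => fsum n (fun i => h i j)).
Proof.
  revert h; induction n as [|n IH]; intros h; simpl.
  - symmetry; apply fsum_zero.
  - rewrite (IH (fun i j => h (Fin.FS i) j)).
    rewrite <- fsum_plus. reflexivity.
Qed.

Lemma fsum_ge_term n (g : Fin.t n -> R) i : (forall j, 0 <= g j) -> g i <= fsum n g.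
Proof.
  revert g i; induction n as [|n IH]; intros g i H; [inversion i|].
  simpl. apply (Fin.caseS' i (fun i => g i <= g Fin.F1 + fsum n (fun i0 => g (Fin.FS i0)))).
  - pose proof (fsum_nonneg n (fun i0 => g (Fin.FS i0)) (fun j => H _)); lra.
  - intros p. pose proof (IH (fun i0 => g (Fin.FS i0)) p (fun j => H _)). pose proof (H Fin.F1); simpl in *; lra.
Qed.

Lemma vdot_sym {n} (x y : vec n) : vdot x y = vdot y x.
Proof. unfold vdot; apply fsum_ext; intros; ring. Qed.

Lemma vdot_add_l {n} (x y z : vec n) : vdot (vadd x y) z = vdot x z + vdot y z.
Proof. unfold vdot, vadd. rewrite <- fsum_plus; apply fsum_ext; intros; ring. Qed.
Lemma vdot_add_r {n} (x y z : vec n) : vdot z (vadd x y) = vdot z x + vdot z y.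
Proof. unfold vdot, vadd. rewrite <- fsum_plus; apply fsum_ext; intros; ring. Qed.
Lemma vdot_sub_l {n} (x y z : vec n) : vdot (vsub x y) z = vdot x z - vdot y z.
Proof. unfold vdot, vsub. rewrite <- fsum_minus; apply fsum_ext; intros; ring. Qed.
Lemma vdot_sub_r {n} (x y z : vec n) : vdot z (vsub x y) = vdot z x - vdot z y.
Proof. unfold vdot, vsub. rewrite <- fsum_minus; apply fsum_ext; intros; ring. Qed.
Lemma vdot_scal_l {n} a (x z : vec n) : vdot (vscal a x) z = a * vdot x z.
Proof. unfold vdot, vscal. rewrite <- fsum_scal; apply fsum_ext; intros; ring. Qed.
Lemma vdot_scal_r {n} a (x z : vec n) : vdot z (vscal a x) = a * vdot z x.
Proof. unfold vdot, vscal. rewrite <- fsum_scal; apply fsum_ext; intros; ring. Qed.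
Lemma vdot_self_nonneg {n} (x : vec n) : 0 <= vdot x x.
Proof. unfold vdot; apply fsum_nonneg; intros; nra. Qed.

Lemma vnorm_nonneg {n} (x : vec n) : 0 <= vnorm x.
Proof. apply sqrt_pos. Qed.

Lemma vnorm_sq {n} (x : vec n) : vnorm x ^ 2 = vdot x x.
Proof. unfold vnorm; rewrite pow2_sqrt; auto using vdot_self_nonneg. Qed.

Lemma vnorm_sq' {n} (x : vec n) : vnorm x * vnorm x = vdot x x.
Proof. unfold vnorm; rewrite sqrt_sqrt; auto using vdot_self_nonneg. Qed.

Lemma le_sqrt_of_sq (p q : R) : 0 <= q -> p <= q * q -> sqrt p <= q.
Proof.
  intros Hq Hp. destruct (Rle_lt_dec p 0).
  - rewrite sqrt_neg_0; lra.
  - rewrite <- (sqrt_square q Hq). apply sqrt_le_1_alt; lra.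
Qed.

Lemma vdot_CS_sq {n} (x y : vec n) : vdot x y * vdot x y <= vdot x x * vdot y y.
Proof.
  set (a := vdot x x); set (b := vdot x y); set (c := vdot y y).
  assert (Hq : forall t, 0 <= a + 2 * t * b + t * t * c).
  { intros t. pose proof (vdot_self_nonneg (vadd x (vscal t y))) as H.
    rewrite !vdot_add_l, !vdot_add_r, !vdot_scal_l, !vdot_scal_r in H.
    rewrite (vdot_sym y x) in H. unfold a, b, c. nra. }
  assert (Ha : 0 <= a) by apply vdot_self_nonneg.
  assert (Hc : 0 <= c) by apply vdot_self_nonneg.
  destruct (Req_dec c 0) as [H0|H0].
  - destruct (Req_dec b 0) as [Hb|Hb].
    + rewrite Hb; nra.
    + exfalso. specialize (Hq (- (a + 1) / (2 * b))).
      rewrite H0 in Hq.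
      replace (2 * (- (a + 1) / (2 * b)) * b) with (-(a+1)) in Hq by (field; auto). lra.
  - specialize (Hq (- b / c)).
    replace (a + 2 * (- b / c) * b + - b / c * (- b / c) * c) with (a - b * b / c) in Hq by (field; auto).
    assert (0 < c) by lra.
    apply Rmult_le_compat_r with (r := c) in Hq; [|lra].
    replace ((a - b * b / c) * c) with (a * c - b * b) in Hq by (field; auto).
    nra.
Qed.

Lemma vdot_CS {n} (x y : vec n) : Rabs (vdot x y) <= vnorm x * vnorm y.
Proof.
  apply Rsqr_incr_0_var; unfold Rsqr.
  - rewrite <- Rabs_mult, Rabs_pos_eq by nra.
    replace (vnorm x * vnorm y * (vnorm x * vnorm y)) with ((vnorm x * vnorm x) * (vnorm y * vnorm y)) by ring.
    rewrite !vnorm_sq'. apply vdot_CS_sq.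
  - apply Rmult_le_pos; apply vnorm_nonneg.
Qed.

Lemma vdot_le {n} (x y : vec n) : vdot x y <= vnorm x * vnorm y.
Proof. pose proof (vdot_CS x y). pose proof (Rle_abs (vdot x y)). lra. Qed.

Lemma vnorm_triang {n} (x y : vec n) : vnorm (vadd x y) <= vnorm x + vnorm y.
Proof.
  unfold vnorm at 1. apply le_sqrt_of_sq.
  - pose proof (vnorm_nonneg x); pose proof (vnorm_nonneg y); lra.
  - rewrite !vdot_add_l, !vdot_add_r. rewrite (vdot_sym y x).
    pose proof (vdot_le x y). rewrite <- !vnorm_sq'. nra.
Qed.

Lemma vnorm_scal {n} a (x : vec n) : vnorm (vscal a x) = Rabs a * vnorm x.
Proof.
  unfold vnorm. rewrite vdot_scal_l, vdot_scal_r, <- Rmult_assoc.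
  rewrite sqrt_mult by (nra || apply vdot_self_nonneg).
  f_equal. rewrite <- sqrt_Rsqr_abs. reflexivity.
Qed.

Lemma vsub_add {n} (x y z : vec n) : vsub x z = vadd (vsub x y) (vsub y z).
Proof. vec_ext. Qed.

Lemma vnorm_sub_tri {n} (x y z : vec n) : vnorm (vsub x z) <= vnorm (vsub x y) + vnorm (vsub y z).
Proof. rewrite (vsub_add x y z). apply vnorm_triang. Qed.

Lemma vnorm_sub_sym {n} (x y : vec n) : vnorm (vsub x y) = vnorm (vsub y x).
Proof.
  replace (vsub x y) with (vscal (-1) (vsub y x)).
  - rewrite vnorm_scal. rewrite (Rabs_left (-1)) by lra. ring.
  - vec_ext.
Qed.

Lemma vsub_zero_r {n} (x : vec n) : vsub x vzero = x.
Proof. vec_ext. Qed.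

Lemma vnorm_zero_sub {n} (x : vec n) : vnorm (vsub x x) = 0.
Proof.
  replace (vsub x x) with (vscal 0 x).
  - rewrite vnorm_scal, Rabs_R0; ring.
  - vec_ext.
Qed.

Lemma vabs_le_norm {n} (v : vec n) i : Rabs (v i) <= vnorm v.
Proof.
  apply Rsqr_incr_0_var; [unfold Rsqr|apply vnorm_nonneg]. rewrite vnorm_sq'.
  rewrite <- Rabs_mult, Rabs_pos_eq by nra.
  unfold vdot. apply (fsum_ge_term n (fun i => v i * v i)). intros; nra.
Qed.

Lemma vnorm_le_sumabs {n} (v : vec n) : vnorm v <= fsum n (fun i => Rabs (v i)).
Proof.
  revert v; induction n as [|n IH]; intros v.
  - unfold vnorm, vdot; simpl. rewrite sqrt_0; lra.
  - simpl. specialize (IH (fun i => v (Fin.FS i))).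
    unfold vnorm, vdot in *; simpl.
    apply le_sqrt_of_sq.
    + pose proof (Rabs_pos (v Fin.F1)). pose proof (sqrt_pos (fsum n (fun i => v (Fin.FS i) * v (Fin.FS i)))). lra.
    + set (s := fsum n (fun i => v (Fin.FS i) * v (Fin.FS i))) in *.
      assert (Hs : 0 <= s) by (apply fsum_nonneg; intros; nra).
      set (t := fsum n (fun i => Rabs (v (Fin.FS i)))) in *.
      assert (s <= t * t).
      { rewrite <- (sqrt_sqrt s Hs). pose proof (sqrt_pos s). nra. }
      assert (0 <= t) by (pose proof (sqrt_pos s); lra).
      pose proof (Rabs_pos (v Fin.F1)).
      assert (v Fin.F1 * v Fin.F1 = Rabs (v Fin.F1) * Rabs (v Fin.F1)) by (rewrite <- Rabs_mult, Rabs_pos_eq; nra).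
      nra.
Qed.

Definition vcv {n} (s : nat -> vec n) (x : vec n) : Prop :=
  forall eps, 0 < eps -> exists K, forall k, (K <= k)%nat -> vnorm (vsub (s k) x) < eps.

Lemma INR_succ_inv_eventually_lt (eps : R) : 0 < eps -> exists N, forall n, (N <= n)%nat -> 1 / (INR n + 1) < eps.
Proof.
  intros He. destruct (INR_unbounded (1 / eps)) as [N HN]. exists N. intros n Hn.
  apply le_INR in Hn. pose proof (pos_INR N).
  assert (1/eps < INR n + 1) by lra.
  apply (Rmult_lt_compat_l eps) in H0; [|lra].
  replace (eps * (1/eps)) with 1 in H0 by (field; lra).
  apply (Rmult_lt_reg_r (INR n + 1)); [lra|].
  replace (1 / (INR n + 1) * (INR n + 1)) with 1 by (field; lra). lra.
Qed.

Lemma CV_const c : Un_cv (fun _ => c) c.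
Proof. intros eps He. exists 0%nat. intros. unfold Rdist. rewrite Rminus_diag, Rabs_R0. lra. Qed.

Lemma CV_ext (a b : nat -> R) l : (forall j, a j = b j) -> Un_cv a l -> Un_cv b l.
Proof. intros H Ha eps He. destruct (Ha eps He) as [K HK]. exists K. intros k Hk. rewrite <- H. auto. Qed.

Lemma CV_abs0 (a : nat -> R) l : Un_cv a l -> Un_cv (fun j => Rabs (a j - l)) 0.
Proof.
  intros Ha eps He. destruct (Ha eps He) as [K HK]. exists K. intros k Hk.
  specialize (HK k Hk). unfold Rdist in *. rewrite Rminus_0_r, Rabs_Rabsolu. auto.
Qed.

Lemma CV_fsum n (f : nat -> Fin.t n -> R) (l : Fin.t n -> R) :
  (forall i, Un_cv (fun j => f j i) (l i)) -> Un_cv (fun j => fsum n (f j)) (fsum n l).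
Proof.
  revert f l; induction n as [|n IH]; intros f l H; simpl.
  - apply CV_const.
  - apply CV_plus; [auto|]. apply (IH (fun j i => f j (Fin.FS i)) (fun i => l (Fin.FS i))). auto.
Qed.

Lemma vcv_comp {n} (s : nat -> vec n) x : vcv s x -> forall i, Un_cv (fun j => s j i) (x i).
Proof.
  intros H i eps He. destruct (H eps He) as [K HK]. exists K. intros k Hk.
  specialize (HK k Hk). unfold Rdist. pose proof (vabs_le_norm (vsub (s k) x) i). unfold vsub in *. lra.
Qed.

Lemma vcv_of_comp {n} (s : nat -> vec n) x : (forall i, Un_cv (fun j => s j i) (x i)) -> vcv s x.
Proof.
  intros H.
  assert (Hc : Un_cv (fun j => fsum n (fun i => Rabs (s j i - x i))) (fsum n (fun _ => 0))).
  { apply CV_fsum. intros i. apply CV_abs0. auto. }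
  rewrite fsum_zero in Hc.
  intros eps He. destruct (Hc eps He) as [K HK]. exists K. intros k Hk.
  specialize (HK k Hk). unfold Rdist in HK. rewrite Rminus_0_r in HK.
  pose proof (vnorm_le_sumabs (vsub (s k) x)). unfold vsub at 2 in H0.
  pose proof (Rle_abs (fsum n (fun i : Fin.t n => Rabs (s k i - x i)))). lra.
Qed.

Lemma CV_vdot {n} (s t : nat -> vec n) x y : vcv s x -> vcv t y ->
  Un_cv (fun j => vdot (s j) (t j)) (vdot x y).
Proof.
  intros Hs Ht. unfold vdot. apply (CV_fsum n (fun j i => s j i * t j i)).
  intros i. apply CV_mult; apply vcv_comp; auto.
Qed.

Lemma CV_vnorm {n} (s : nat -> vec n) x : vcv s x -> Un_cv (fun j => vnorm (s j)) (vnorm x).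
Proof.
  intros H eps He. destruct (H eps He) as [K HK]. exists K. intros k Hk. specialize (HK k Hk).
  unfold Rdist. pose proof (vnorm_sub_tri (s k) x vzero). pose proof (vnorm_sub_tri x (s k) vzero).
  rewrite (vnorm_sub_sym x (s k)) in H1.
  rewrite !vsub_zero_r in *.
  apply Rabs_def1; lra.
Qed.

Lemma vcv_const {n} (x : vec n) : vcv (fun _ => x) x.
Proof. intros eps He. exists 0%nat. intros. rewrite vnorm_zero_sub. lra. Qed.

Lemma vcv_add {n} (s t : nat -> vec n) x y : vcv s x -> vcv t y -> vcv (fun j => vadd (s j) (t j)) (vadd x y).
Proof.
  intros. apply vcv_of_comp. intros i. unfold vadd. apply CV_plus; apply vcv_comp; auto.
Qed.

Lemma vcv_sub {n} (s t : nat -> vec n) x y : vcv s x -> vcv t y -> vcv (fun j => vsub (s j) (t j)) (vsub x y).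
Proof.
  intros. apply vcv_of_comp. intros i. unfold vsub. apply CV_minus; apply vcv_comp; auto.
Qed.

Lemma vcv_of_close {n} (s t : nat -> vec n) x : vcv s x -> Un_cv (fun j => vnorm (vsub (t j) (s j))) 0 -> vcv t x.
Proof.
  intros Hs Ht eps He. destruct (Hs (eps/2)) as [K1 H1]; [lra|]. destruct (Ht (eps/2)) as [K2 H2]; [lra|].
  exists (K1 + K2)%nat. intros k Hk. specialize (H1 k ltac:(lia)). specialize (H2 k ltac:(lia)).
  unfold Rdist in H2. rewrite Rminus_0_r, Rabs_pos_eq in H2 by apply vnorm_nonneg.
  pose proof (vnorm_sub_tri (t k) (s k) x). lra.
Qed.

Definition strict_incr (phi : nat -> nat) := forall j, (phi j < phi (S j))%nat.

Lemma strict_incr_ge phi : strict_incr phi -> forall j, (j <= phi j)%nat.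
Proof. intros H j; induction j; [lia|]. specialize (H j). lia. Qed.

Lemma strict_incr_mono phi : strict_incr phi -> forall i j, (i <= j)%nat -> (phi i <= phi j)%nat.
Proof. intros H i j Hij. induction Hij; [lia|]. specialize (H m). lia. Qed.

Lemma strict_incr_comp phi psi : strict_incr phi -> strict_incr psi -> strict_incr (fun j => phi (psi j)).
Proof.
  intros H1 H2 j. pose proof (strict_incr_mono phi H1 (S (psi j)) (psi (S j)) (H2 j)). specialize (H1 (psi j)). lia.
Qed.

Lemma CV_subseq (a : nat -> R) l phi : (forall j, (j <= phi j)%nat) -> Un_cv a l -> Un_cv (fun j => a (phi j)) l.
Proof. intros Hp H eps He. destruct (H eps He) as [K HK]. exists K. intros k Hk. apply HK. specialize (Hp k). lia. Qed.

Lemma vcv_subseq {n} (s : nat -> vec n) x phi : (forall j, (j <= phi j)%nat) -> vcv s x -> vcv (fun j => s (phi j)) x.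
Proof. intros Hp H eps He. destruct (H eps He) as [K HK]. exists K. intros k Hk. apply HK. specialize (Hp k). lia. Qed.

Lemma frequently_small_subseq (d : nat -> R) :
  (forall m r, 0 < r -> exists p, (m < p)%nat /\ Rabs (d p) < r) ->
  exists phi, strict_incr phi /\ Un_cv (fun j => d (phi j)) 0.
Proof.
  intros Hd.
  destruct (choice (fun (mk : nat * nat) p => (fst mk < p)%nat /\ Rabs (d p) < 1 / (INR (snd mk) + 1)))
    as [g Hg].
  { intros [m k]. apply Hd. simpl. pose proof (pos_INR k). apply Rdiv_lt_0_compat; lra. }
  set (phi := fix phi j := match j with O => g (O, O) | S j' => g (phi j', S j') end).
  exists phi. split.
  - intros j. exact (proj1 (Hg (phi j, S j))).
  - intros eps He. destruct (INR_succ_inv_eventually_lt eps He) as [K HK]. exists K. intros k Hk.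
    unfold Rdist. rewrite Rminus_0_r. eapply Rlt_trans; [|apply (HK k); lia].
    destruct k; [exact (proj2 (Hg (O, O)))|exact (proj2 (Hg (phi k, S k)))].
Qed.

Lemma Rseq_bounded_cv_subseq (u : nat -> R) B : (forall k, Rabs (u k) <= B) ->
  exists phi l, strict_incr phi /\ Un_cv (fun j => u (phi j)) l.
Proof.
  intros Hb.
  destruct (Bolzano_Weierstrass u (fun c => -B <= c <= B) (compact_P3 (-B) B)) as [l Hl].
  { intros n. specialize (Hb n). pose proof (Rle_abs (u n)). pose proof (Rle_abs (- u n)). rewrite Rabs_Ropp in *. lra. }
  destruct (frequently_small_subseq (fun p => u p - l)) as [phi [Hphi Hcv]].
  { intros m r Hr. destruct (Hl (disc l (mkposreal _ Hr)) (S m)) as [p [Hp1 Hp2]].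
    - exists (mkposreal _ Hr). intros y Hy; exact Hy.
    - exists p. split; [lia|exact Hp2]. }
  exists phi, l. split; [exact Hphi|].
  apply CV_ext with (fun j => (u (phi j) - l) + l); [intros j; ring|].
  pose proof (CV_plus _ _ 0 l Hcv (CV_const l)) as H. rewrite Rplus_0_l in H. exact H.
Qed.

Definition vcons {n} (a : R) (t : vec n) : vec (S n) := fun i => Fin.caseS' i (fun _ => R) a t.

Lemma vnorm_tail {n} (v : vec (S n)) : vnorm (fun i => v (Fin.FS i)) <= vnorm v.
Proof.
  unfold vnorm. apply sqrt_le_1_alt. unfold vdot; simpl. nra.
Qed.

Lemma vseq_bounded_cv_subseq {n} (s : nat -> vec n) B : (forall k, vnorm (s k) <= B) ->
  exists phi x, strict_incr phi /\ vcv (fun j => s (phi j)) x.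
Proof.
  revert s; induction n as [|n IH]; intros s Hb.
  - exists (fun j => j), vzero. split; [intros j; lia|].
    intros eps He. exists 0%nat. intros. unfold vnorm, vdot; simpl. rewrite sqrt_0. lra.
  - destruct (IH (fun k i => s k (Fin.FS i))) as [phi1 [t [Hp1 Ht]]].
    { intros k. eapply Rle_trans; [apply (vnorm_tail (s k))|]. auto. }
    destruct (Rseq_bounded_cv_subseq (fun j => s (phi1 j) Fin.F1) B) as [phi2 [a [Hp2 Ha]]].
    { intros k. eapply Rle_trans; [apply vabs_le_norm|]. auto. }
    exists (fun j => phi1 (phi2 j)), (vcons a t). split.
    + apply strict_incr_comp; auto.
    + apply vcv_of_comp. intros i.
      apply (Fin.caseS' i (fun i => Un_cv (fun j : nat => s (phi1 (phi2 j)) i) (vcons a t i))).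
      * exact Ha.
      * intros p. simpl. pose proof (vcv_comp _ _ Ht p) as Hp.
        apply (CV_subseq _ _ phi2 (strict_incr_ge _ Hp2)) in Hp. exact Hp.
Qed.

Lemma frequently_bounded_cluster_point {n} (s : nat -> vec n) (P : nat -> Prop) B :
  (forall k, P k -> vnorm (s k) <= B) -> (forall K, exists k, (K <= k)%nat /\ P k) ->
  exists x, forall eps, 0 < eps -> forall K, exists k, (K <= k)%nat /\ P k /\ vnorm (vsub (s k) x) < eps.
Proof.
  intros Hb Hinf. destruct (choice _ Hinf) as [psi Hpsi].
  destruct (vseq_bounded_cv_subseq (fun K => s (psi K)) B) as [phi [x [Hphi Hx]]].
  { intros K. apply Hb, Hpsi. }
  exists x. intros eps He K. destruct (Hx eps He) as [K1 HK1].
  exists (psi (phi (K + K1)%nat)). pose proof (strict_incr_ge _ Hphi (K + K1)%nat).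
  pose proof (Hpsi (phi (K + K1)%nat)). split; [lia|]. split; [tauto|]. apply HK1. lia.
Qed.

Lemma accumulation_point_subseq {n} (z : nat -> vec n) x : accumulation_point z x ->
  exists phi, strict_incr phi /\ vcv (fun j => z (phi j)) x.
Proof.
  intros Hacc. destruct (frequently_small_subseq (fun p => vnorm (vsub (z p) x))) as [phi [Hphi Hcv]].
  { intros m r Hr. destruct (Hacc r Hr (S m)) as [p [Hp1 Hp2]].
    exists p. rewrite Rabs_pos_eq by apply vnorm_nonneg. split; [lia|exact Hp2]. }
  exists phi. split; [exact Hphi|]. intros eps He. destruct (Hcv eps He) as [K HK]. exists K.
  intros k Hk. specialize (HK k Hk). unfold Rdist in HK.
  rewrite Rminus_0_r, Rabs_pos_eq in HK by apply vnorm_nonneg. exact HK.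
Qed.

Lemma CV_scal_sqnorm {n} c (s : nat -> vec n) x : vcv s x -> Un_cv (fun j => c * vnorm (s j) ^ 2) (c * vnorm x ^ 2).
Proof.
  intros H. apply CV_mult; [apply CV_const|]. simpl.
  apply CV_mult; [apply CV_vnorm; auto|]. apply CV_mult; [apply CV_vnorm; auto|apply CV_const].
Qed.

(* Real-valued F, with junk value 0 outside dom F. *)
Definition fval {n} (F : vec n -> ereal) (x : vec n) : R :=
  match F x with Some a => a | None => 0 end.

Lemma fval_some {n} (F : vec n -> ereal) x a : F x = Some a -> fval F x = a.
Proof. unfold fval; intros ->; auto. Qed.

Lemma dom_fval {n} (F : vec n -> ereal) x : dom F x -> F x = Some (fval F x).
Proof. unfold dom, fval. destruct (F x); congruence. Qed.

Lemma vdot_zero_r {n} (x : vec n) : vdot x vzero = 0.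
Proof. unfold vdot, vzero. transitivity (fsum n (fun _ => 0)); [apply fsum_ext; intros; ring|apply fsum_zero]. Qed.

Lemma jac_scal {N M} (DA : vec N -> Fin.t M -> vec N) y t h :
  jac_apply DA y (vscal t h) = vscal t (jac_apply DA y h).
Proof. apply functional_extensionality; intros j. unfold jac_apply, vscal at 1. apply vdot_scal_r. Qed.

Lemma jac_adjoint {N M} (DA : vec N -> Fin.t M -> vec N) y (a : vec M) (h : vec N) :
  vdot a (jac_apply DA y h) = vdot (jacT_apply DA y a) h.
Proof.
  unfold jac_apply, jacT_apply, vdot.
  transitivity (fsum M (fun j => fsum N (fun i => a j * DA y j i * h i))).
  - apply fsum_ext; intros j. rewrite <- fsum_scal. apply fsum_ext; intros; ring.
  - rewrite fsum_swap. apply fsum_ext; intros i. rewrite Rmult_comm, <- fsum_scal.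
    apply fsum_ext; intros; ring.
Qed.

Definition jnorm {N M} (DA : vec N -> Fin.t M -> vec N) y := fsum M (fun j => vnorm (DA y j)).

Lemma jac_bound {N M} (DA : vec N -> Fin.t M -> vec N) y h :
  vnorm (jac_apply DA y h) <= jnorm DA y * vnorm h.
Proof.
  eapply Rle_trans; [apply vnorm_le_sumabs|]. unfold jnorm. rewrite Rmult_comm, <- fsum_scal.
  apply fsum_le. intros j. unfold jac_apply. rewrite Rmult_comm. apply vdot_CS.
Qed.

Definition relax {n} (w : R) (x y : vec n) : vec n := vadd (vscal (1 - w) x) (vscal w y).

Lemma relax_sub {n} w (x y : vec n) : vsub (relax w x y) x = vscal w (vsub y x).
Proof. unfold relax. vec_ext. Qed.

Lemma halfsq_convex {n} (a b : vec n) w : 0 <= w <= 1 ->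
  1/2 * vnorm (relax w a b) ^ 2 <= (1 - w) * (1/2 * vnorm a ^ 2) + w * (1/2 * vnorm b ^ 2).
Proof.
  intros Hw. unfold relax. rewrite !vnorm_sq.
  rewrite !vdot_add_l, !vdot_add_r, !vdot_scal_l, !vdot_scal_r.
  rewrite (vdot_sym b a).
  pose proof (vdot_self_nonneg (vsub a b)) as H.
  rewrite !vdot_sub_l, !vdot_sub_r in H. rewrite (vdot_sym b a) in H.
  assert (0 <= w * (1 - w)) by nra. nra.
Qed.

Lemma halfsq_sub_le {n} (a b : vec n) : 1/2 * vnorm a ^ 2 - 1/2 * vnorm b ^ 2 <= vnorm (vsub a b) * vnorm a.
Proof.
  rewrite !vnorm_sq. pose proof (vdot_le (vsub a b) a).
  pose proof (vdot_self_nonneg (vsub a b)) as H1.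
  rewrite !vdot_sub_l, !vdot_sub_r in *. rewrite (vdot_sym b a) in *. nra.
Qed.

Lemma vsub_convex_comb {n} (x y : vec n) t :
  vsub (vadd (vscal t y) (vscal (1 - t) x)) x = vscal t (vsub y x).
Proof. vec_ext. Qed.

Lemma convex_fun_relax {n} (F : vec n -> ereal) w x y :
  convex_fun F -> 0 <= w <= 1 -> dom F x -> dom F y ->
  dom F (relax w x y) /\ fval F (relax w x y) <= (1 - w) * fval F x + w * fval F y.
Proof.
  intros Hc Hw Hx Hy. unfold relax.
  destruct (Hc x y (1 - w) _ _ ltac:(lra) (dom_fval F x Hx) (dom_fval F y Hy)) as [c [H1 H2]].
  replace (1 - (1 - w)) with w in * by ring.
  rewrite (fval_some _ _ _ H1). split; [unfold dom; rewrite H1; discriminate|exact H2].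
Qed.

(* Moving from x towards y by t changes the model by t (F y - F x + <a, A'(y - x)>) + O(t^2),
   so minimality of x forces that first-order term to be nonnegative. *)
Lemma prox_linear_stationary {N M} (F : vec N -> ereal) (DA : vec N -> Fin.t M -> vec N)
  (a : vec M) (x : vec N) beta :
  convex_fun F -> 0 < beta -> dom F x ->
  (forall y, dom F y ->
     fval F x + 1/2 * vnorm a ^ 2 <= fval F y + 1/2 * vnorm (vadd a (jac_apply DA x (vsub y x))) ^ 2
        + beta / 2 * vnorm (vsub y x) ^ 2) ->
  subdiff F x (vscal (-1) (jacT_apply DA x a)).
Proof.
  intros Hconv Hb Hx Hopt. exists (fval F x). split; [apply dom_fval; exact Hx|].
  intros y. destruct (F y) as [fy|] eqn:Hfy; simpl; [|exact I].
  rewrite vdot_scal_l.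
  set (h := vsub y x). set (b := jac_apply DA x h).
  set (p := vdot (jacT_apply DA x a) h).
  assert (Hp : p = vdot a b) by (unfold p, b; rewrite jac_adjoint; reflexivity).
  set (Q := 1/2 * vdot b b + beta/2 * vdot h h).
  assert (HQ : 0 <= Q) by (unfold Q; pose proof (vdot_self_nonneg b); pose proof (vdot_self_nonneg h); nra).
  assert (Ht : forall t, 0 < t <= 1 -> 0 <= fy - fval F x + p + t * Q).
  { intros t Ht.
    destruct (Hconv y x t fy (fval F x) ltac:(lra) Hfy (dom_fval F x Hx)) as [c [Hc Hcle]].
    assert (Hdc : dom F (vadd (vscal t y) (vscal (1 - t) x))) by (unfold dom; rewrite Hc; discriminate).
    specialize (Hopt _ Hdc). rewrite (fval_some _ _ _ Hc), vsub_convex_comb in Hopt. fold h in Hopt.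
    rewrite jac_scal in Hopt. fold b in Hopt.
    rewrite !vnorm_sq, vdot_scal_l, vdot_scal_r in Hopt.
    rewrite !vdot_add_l, !vdot_add_r, !vdot_scal_l, !vdot_scal_r in Hopt.
    rewrite (vdot_sym b a), <- Hp in Hopt.
    assert (t * (fy - fval F x + p + t * Q) >= 0) by (unfold Q; nra).
    nra. }
  destruct (Rle_lt_dec 0 (fy - fval F x + p)) as [H0|H0]; [unfold p, h in *; lra|].
  exfalso. set (g0 := fy - fval F x + p) in *.
  set (t := Rmin 1 (- g0 / (2 * (Q + 1)))).
  assert (Ht0 : 0 < t).
  { unfold t. apply Rmin_glb_lt; [lra|]. apply Rdiv_lt_0_compat; lra. }
  assert (Ht1 : t <= 1) by apply Rmin_l.
  assert (Ht2 : t <= - g0 / (2 * (Q + 1))) by apply Rmin_r.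
  specialize (Ht t (conj Ht0 Ht1)).
  assert (t * Q <= - g0 / 2).
  { apply Rle_trans with (- g0 / (2 * (Q + 1)) * Q).
    - apply Rmult_le_compat_r; lra.
    - apply (Rmult_le_reg_r (2 * (Q+1))); [lra|].
      replace (- g0 / (2 * (Q + 1)) * Q * (2 * (Q + 1))) with (- g0 * Q) by (field; lra). nra. }
  lra.
Qed.

Lemma lsc_dom_lim {n} (F : vec n -> ereal) (s : nat -> vec n) x c :
  lsc F -> vcv s x -> (forall j, dom F (s j) /\ fval F (s j) <= c) -> dom F x.
Proof.
  intros Hl Hs Hb Hn. destruct (Hl x c) as [r [Hr Hr']]; [rewrite Hn; exact I|].
  destruct (Hs r Hr) as [K HK]. specialize (Hr' _ (HK K (le_n K))).
  destruct (Hb K) as [HdK HcK]. rewrite (dom_fval F _ HdK) in Hr'. simpl in Hr'. lra.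
Qed.

Lemma lsc_le_lim {n} (F : vec n -> ereal) (s : nat -> vec n) x (h : nat -> R) l :
  lsc F -> dom F x -> vcv s x -> (forall j, dom F (s j)) ->
  (forall j, fval F (s j) <= h j) -> Un_cv h l -> fval F x <= l.
Proof.
  intros Hl Hx Hs Hds Hle Hh. destruct (Rle_lt_dec (fval F x) l) as [|Hlt]; auto. exfalso.
  set (r := (l + fval F x) / 2).
  destruct (Hl x r) as [de [Hde Hde']]. { rewrite (dom_fval F x Hx); simpl; unfold r; lra. }
  destruct (Hs de Hde) as [K1 HK1]. destruct (Hh (fval F x - r)) as [K2 HK2]; [unfold r; lra|].
  specialize (HK1 (K1 + K2)%nat ltac:(lia)). specialize (HK2 (K1 + K2)%nat ltac:(lia)).
  specialize (Hde' _ HK1). rewrite (dom_fval F _ (Hds _)) in Hde'. simpl in Hde'.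
  specialize (Hle (K1 + K2)%nat). unfold Rdist in HK2. pose proof (Rle_abs (h (K1 + K2)%nat - l)).
  unfold r in *. lra.
Qed.

Definition Jreal {N M} (A : vec N -> vec M) (F : vec N -> ereal) (x : vec N) : R :=
  1/2 * vnorm (A x) ^ 2 + fval F x.

Lemma Jfun_Jreal {N M} (A : vec N -> vec M) F x : dom F x -> Jfun A F x = Some (Jreal A F x).
Proof. intros Hx. unfold Jfun, Jreal. rewrite (dom_fval F x Hx). reflexivity. Qed.

Lemma Jfun_some {N M} (A : vec N -> vec M) F x v : Jfun A F x = Some v -> dom F x /\ v = Jreal A F x.
Proof.
  unfold Jfun, Jreal, dom, fval. destruct (F x); simpl; intros H; inversion H; split; congruence.
Qed.

Definition prox_model {N M} (A : vec N -> vec M) (DA : vec N -> Fin.t M -> vec N) beta (z x : vec N) : R :=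
  1/2 * vnorm (linA A DA z x) ^ 2 + beta / 2 * vnorm (vsub x z) ^ 2.

Lemma Jtilde_some {N M} (A : vec N -> vec M) DA F beta z x g :
  Jtilde A DA F beta z x = Some g -> dom F x /\ g = prox_model A DA beta z x + fval F x.
Proof.
  unfold Jtilde, prox_model, eplus, dom, fval. destruct (F x); simpl; intros H; inversion H; split; congruence.
Qed.

Lemma Jtilde_val {N M} (A : vec N -> vec M) DA F beta z x :
  dom F x -> Jtilde A DA F beta z x = Some (prox_model A DA beta z x + fval F x).
Proof. intros Hx. unfold Jtilde. rewrite (dom_fval F x Hx). reflexivity. Qed.

Lemma subdiff_Jtilde {N M} (A : vec N -> vec M) DA F beta z x e :
  subdiff (Jtilde A DA F beta z) x e ->
  dom F x /\ forall y, dom F y ->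
    prox_model A DA beta z x + fval F x + vdot e (vsub y x) <= prox_model A DA beta z y + fval F y.
Proof.
  intros [g [Hg Hsub]]. apply Jtilde_some in Hg as [Hx ->]. split; [exact Hx|].
  intros y Hy. specialize (Hsub y). rewrite (Jtilde_val A DA F beta z y Hy) in Hsub. exact Hsub.
Qed.

Lemma linA_relax {N M} (A : vec N -> vec M) DA w (z x : vec N) :
  linA A DA z (relax w z x) = relax w (A z) (linA A DA z x).
Proof.
  unfold linA. rewrite relax_sub, jac_scal. unfold relax. vec_ext.
Qed.

Lemma linA_self {N M} (A : vec N -> vec M) DA z : linA A DA z z = A z.
Proof.
  apply functional_extensionality; intros j. unfold linA, vadd, jac_apply.
  replace (vsub z z) with (@vzero N) by vec_ext.
  rewrite vdot_zero_r. ring.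
Qed.

Lemma prox_model_self {N M} (A : vec N -> vec M) DA beta z :
  prox_model A DA beta z z = 1/2 * vnorm (A z) ^ 2.
Proof. unfold prox_model. rewrite linA_self, vnorm_zero_sub. ring. Qed.

Lemma C1_A_locally_lipschitz {N M} (D : vec N -> Prop) (A : vec N -> vec M) DA x :
  C1_on D A DA -> D x -> exists de, 0 < de /\ forall y, vnorm (vsub y x) < de ->
    vnorm (vsub (A y) (A x)) <= (1 + jnorm DA x) * vnorm (vsub y x).
Proof.
  intros [H1 _] Hx. destruct (H1 x Hx 1 ltac:(lra)) as [de [Hde Hde']].
  exists de. split; [exact Hde|]. intros y Hy. specialize (Hde' y Hy).
  pose proof (vnorm_triang (vsub (vsub (A y) (A x)) (jac_apply DA x (vsub y x))) (jac_apply DA x (vsub y x))) as Ht.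
  replace (vadd (vsub (vsub (A y) (A x)) (jac_apply DA x (vsub y x))) (jac_apply DA x (vsub y x)))
    with (vsub (A y) (A x)) in Ht by vec_ext.
  pose proof (jac_bound DA x (vsub y x)). lra.
Qed.

Lemma C1_vcv_A {N M} (D : vec N -> Prop) (A : vec N -> vec M) DA x (s : nat -> vec N) :
  C1_on D A DA -> D x -> vcv s x -> vcv (fun j => A (s j)) (A x).
Proof.
  intros HC Hx Hs. destruct (C1_A_locally_lipschitz D A DA x HC Hx) as [de [Hde Hlip]].
  set (c := 1 + jnorm DA x).
  assert (Hc : 0 < c).
  { unfold c, jnorm. pose proof (fsum_nonneg M (fun j => vnorm (DA x j)) (fun j => vnorm_nonneg _)). lra. }
  intros eps He. destruct (Hs (Rmin de (eps / c))) as [K HK].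
  { apply Rmin_glb_lt; auto. apply Rdiv_lt_0_compat; lra. }
  exists K. intros k Hk. specialize (HK k Hk).
  pose proof (Rmin_l de (eps / c)). pose proof (Rmin_r de (eps / c)).
  specialize (Hlip (s k) ltac:(lra)). fold c in Hlip.
  apply Rle_lt_trans with (c * vnorm (vsub (s k) x)); [exact Hlip|].
  apply (Rmult_lt_reg_l (/ c)); [apply Rinv_0_lt_compat; lra|].
  replace (/ c * (c * vnorm (vsub (s k) x))) with (vnorm (vsub (s k) x)) by (field; lra).
  replace (/ c * eps) with (eps / c) by (unfold Rdiv; ring). lra.
Qed.

Lemma C1_vcv_DA {N M} (D : vec N -> Prop) (A : vec N -> vec M) DA x (s : nat -> vec N) :
  C1_on D A DA -> D x -> (forall j, D (s j)) -> vcv s x -> forall i, vcv (fun j => DA (s j) i) (DA x i).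
Proof.
  intros [_ H2] Hd Hds Hs i eps He. destruct (H2 x Hd i eps He) as [de [Hde Hde']].
  destruct (Hs de Hde) as [K HK]. exists K. intros k Hk. apply Hde'; auto.
Qed.

Lemma vcv_jac_apply {N M} (DA : vec N -> Fin.t M -> vec N) (s : nat -> vec N) x (h : nat -> vec N) hh :
  (forall i, vcv (fun j => DA (s j) i) (DA x i)) -> vcv h hh ->
  vcv (fun j => jac_apply DA (s j) (h j)) (jac_apply DA x hh).
Proof.
  intros HD Hh. apply vcv_of_comp. intros i. unfold jac_apply. apply CV_vdot; auto.
Qed.

Lemma C1_vcv_linA {N M} (D : vec N -> Prop) (A : vec N -> vec M) DA x (s t : nat -> vec N) y :
  C1_on D A DA -> D x -> (forall j, D (s j)) -> vcv s x -> vcv t y ->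
  vcv (fun j => linA A DA (s j) (t j)) (linA A DA x y).
Proof.
  intros HC Hd Hds Hs Ht. unfold linA. apply vcv_add.
  - eapply C1_vcv_A; eauto.
  - apply vcv_jac_apply. + eapply C1_vcv_DA; eauto. + apply vcv_sub; auto.
Qed.


Lemma closed_dist_to_zero_accumulation {n} (z : nat -> vec n) (U : vec n -> Prop) x :
  closed_vset U -> dist_to_zero z U -> accumulation_point z x -> U x.
Proof.
  intros HU Hd Hx. apply HU. intros r Hr.
  destruct (Hd (r / 2) ltac:(lra)) as [K HK]. destruct (Hx (r / 2) ltac:(lra) K) as [k [Hk Hzk]].
  destruct (HK k Hk) as [u [Hu Hzu]]. exists u. split; [exact Hu|].
  pose proof (vnorm_sub_tri u (z k) x). rewrite (vnorm_sub_sym u (z k)) in H. lra.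
Qed.

Lemma eventually_near_accumulation_set {n} (z : nat -> vec n) (P : vec n -> Prop) B :
  (forall k, vnorm (z k) <= B) -> (forall x, accumulation_point z x -> P x) ->
  forall r, 0 < r -> exists K, forall k, (K <= k)%nat -> exists v, P v /\ vnorm (vsub (z k) v) < r.
Proof.
  intros Hzb HP r Hr. apply NNPP. intros Hn.
  set (far := fun k => ~ exists v, P v /\ vnorm (vsub (z k) v) < r).
  assert (Hfar : forall K, exists k, (K <= k)%nat /\ far k).
  { intros K. apply NNPP. intros Hk. apply Hn. exists K. intros k Hk2. apply NNPP. intros Hk3.
    apply Hk. exists k. split; auto. }
  destruct (frequently_bounded_cluster_point z far B (fun k _ => Hzb k) Hfar) as [x Hx].
  assert (Hxacc : accumulation_point z x).
  { intros ep Hep K. destruct (Hx ep Hep K) as [k [Hk [_ Hk2]]]. exists k; auto. }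
  destruct (Hx r Hr 0%nat) as [k [_ [Hk Hzk]]]. apply Hk. exists x. split; auto.
Qed.

Lemma closed_disjoint_separated {n} (U1 U2 : vec n -> Prop) B :
  closed_vset U1 -> closed_vset U2 -> (forall x, ~ (U1 x /\ U2 x)) ->
  exists dl, 0 < dl /\ forall x v1 v2, vnorm x <= B -> U1 v1 -> U2 v2 ->
    vnorm (vsub x v1) < dl -> vnorm (vsub x v2) < dl -> False.
Proof.
  intros HU1 HU2 Hdisj. apply NNPP. intros Hn.
  assert (Hall : forall k : nat, exists p : vec n * vec n * vec n,
             vnorm (fst (fst p)) <= B /\ U1 (snd (fst p)) /\ U2 (snd p) /\
             vnorm (vsub (fst (fst p)) (snd (fst p))) < 1 / (INR k + 1) /\
             vnorm (vsub (fst (fst p)) (snd p)) < 1 / (INR k + 1)).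
  { intros k. apply NNPP. intros Hk. apply Hn. exists (1 / (INR k + 1)). split.
    { pose proof (pos_INR k). apply Rdiv_lt_0_compat; lra. }
    intros x v1 v2 H1 H2 H3 H4 H5. apply Hk. exists (x, v1, v2). simpl. auto. }
  destruct (choice _ Hall) as [pk Hpk].
  assert (Hsm : forall k, 1 / (INR k + 1) <= 1).
  { intros k. pose proof (pos_INR k). apply (Rmult_le_reg_r (INR k + 1)); [lra|].
    replace (1 / (INR k + 1) * (INR k + 1)) with 1 by (field; lra). lra. }
  destruct (frequently_bounded_cluster_point (fun k => snd (fst (pk k))) (fun _ => True) (B + 1)) as [y Hy].
  { intros k _. destruct (Hpk k) as [H1 [_ [_ [H4 _]]]]. specialize (Hsm k).
    pose proof (vnorm_sub_tri (snd (fst (pk k))) (fst (fst (pk k))) vzero) as H.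
    rewrite !vsub_zero_r, vnorm_sub_sym in H. lra. }
  { intros K. exists K. auto. }
  apply (Hdisj y). split.
  - apply HU1. intros ep Hep. destruct (Hy ep Hep 0%nat) as [k [_ [_ Hk]]].
    exists (snd (fst (pk k))). split; [apply Hpk|auto].
  - apply HU2. intros ep Hep. destruct (INR_succ_inv_eventually_lt (ep / 4)) as [K HK]; [lra|].
    destruct (Hy (ep / 2) ltac:(lra) K) as [k [Hk [_ Hk2]]].
    exists (snd (pk k)). split; [apply Hpk|].
    destruct (Hpk k) as [_ [_ [_ [H4 H5]]]]. specialize (HK k Hk).
    pose proof (vnorm_sub_tri (snd (pk k)) (fst (fst (pk k))) y) as H.
    pose proof (vnorm_sub_tri (fst (fst (pk k))) (snd (fst (pk k))) y).
    rewrite (vnorm_sub_sym (snd (pk k)) (fst (fst (pk k)))) in H. lra.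
Qed.

(* Once steps are shorter than half the separation, a sequence near U1 cannot jump to
   the neighbourhood of U2. *)
Lemma trapped_near_component {n} (z : nat -> vec n) (U1 U2 : vec n -> Prop) B de K :
  0 < de -> (forall k, vnorm (z k) <= B) ->
  (forall x v1 v2, vnorm x <= B -> U1 v1 -> U2 v2 -> vnorm (vsub x v1) < de -> vnorm (vsub x v2) < de -> False) ->
  (forall r, 0 < r -> exists K', forall k, (K' <= k)%nat -> exists v, (U1 v \/ U2 v) /\ vnorm (vsub (z k) v) < r) ->
  (forall k, (K <= k)%nat -> vnorm (vsub (z (S k)) (z k)) < de / 2) ->
  (forall k, (K <= k)%nat -> exists v, (U1 v \/ U2 v) /\ vnorm (vsub (z k) v) < de / 2) ->
  (exists v, U1 v /\ vnorm (vsub (z K) v) < de / 2) ->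
  dist_to_zero z U1.
Proof.
  intros Hde Hzb Hsep Hnear Hst Hnear2 H0.
  assert (Hstay : forall m, exists v, U1 v /\ vnorm (vsub (z (K + m)%nat) v) < de / 2).
  { induction m as [|m IH].
    - rewrite Nat.add_0_r. exact H0.
    - destruct IH as [v [Hv1 Hv2]]. destruct (Hnear2 (K + S m)%nat ltac:(lia)) as [v' [[H1|H2] Hv']].
      + exists v'; auto.
      + exfalso. apply (Hsep (z (K + m)%nat) v v'); auto; [lra|].
        pose proof (vnorm_sub_tri (z (K + m)%nat) (z (S (K + m))) v').
        specialize (Hst (K + m)%nat ltac:(lia)). rewrite vnorm_sub_sym in Hst.
        replace (S (K + m)) with (K + S m)%nat in * by lia. lra. }
  intros eps He. destruct (Hnear (Rmin eps (de / 2))) as [K3 HK3]; [apply Rmin_glb_lt; lra|].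
  exists (K + K3)%nat. intros k Hk.
  pose proof (Rmin_l eps (de / 2)). pose proof (Rmin_r eps (de / 2)).
  destruct (HK3 k ltac:(lia)) as [v' [[Hv1'|Hv2'] Hv']].
  - exists v'. split; [exact Hv1'|lra].
  - exfalso. destruct (Hstay (k - K)%nat) as [v [Hv1 Hv2]].
    replace (K + (k - K))%nat with k in Hv2 by lia.
    apply (Hsep (z k) v v'); auto; lra.
Qed.

Lemma approaches_one_component {n} (z : nat -> vec n) (U1 U2 : vec n -> Prop) B :
  (forall k, vnorm (z k) <= B) -> Un_cv (fun k => vnorm (vsub (z (S k)) (z k))) 0 ->
  closed_vset U1 -> closed_vset U2 -> (forall x, ~ (U1 x /\ U2 x)) ->
  (forall x, accumulation_point z x -> U1 x \/ U2 x) ->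
  ((forall x, accumulation_point z x -> U1 x) /\ dist_to_zero z U1) \/
  ((forall x, accumulation_point z x -> U2 x) /\ dist_to_zero z U2).
Proof.
  intros Hzb Hstep HU1 HU2 Hdisj Hacc.
  destruct (closed_disjoint_separated U1 U2 B HU1 HU2 Hdisj) as [dl [Hdl Hsep]].
  pose proof (eventually_near_accumulation_set z _ B Hzb Hacc) as Hnear.
  destruct (Hnear (dl / 2) ltac:(lra)) as [K1 HK1].
  destruct (Hstep (dl / 2) ltac:(lra)) as [K2 HK2].
  set (K := (K1 + K2)%nat).
  assert (Hst : forall k, (K <= k)%nat -> vnorm (vsub (z (S k)) (z k)) < dl / 2).
  { intros k Hk. specialize (HK2 k ltac:(unfold K in *; lia)). unfold Rdist in HK2.
    rewrite Rminus_0_r, Rabs_pos_eq in HK2 by apply vnorm_nonneg. exact HK2. }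
  assert (Hnear2 : forall k, (K <= k)%nat -> exists v, (U1 v \/ U2 v) /\ vnorm (vsub (z k) v) < dl / 2).
  { intros k Hk. apply HK1. unfold K in *; lia. }
  destruct (Hnear2 K (le_n K)) as [v0 [[H1|H2] Hv0]].
  - left. assert (Hd : dist_to_zero z U1)
      by (apply (trapped_near_component z U1 U2 B dl K Hdl Hzb Hsep); eauto).
    split; [intros x; apply closed_dist_to_zero_accumulation; auto|exact Hd].
  - right. assert (Hd : dist_to_zero z U2).
    { apply (trapped_near_component z U2 U1 B dl K Hdl Hzb).
      - intros x v1 v2 Hx Hv1 Hv2 Hd1 Hd2. exact (Hsep x v2 v1 Hx Hv2 Hv1 Hd2 Hd1).
      - intros r Hr. destruct (Hnear r Hr) as [K' HK']. exists K'. intros k Hk.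
        destruct (HK' k Hk) as [v [Hv Hv']]. exists v. split; [tauto|auto].
      - exact Hst.
      - intros k Hk. destruct (Hnear2 k Hk) as [v [Hv Hv']]. exists v. split; [tauto|auto].
      - exists v0; auto. }
    split; [intros x; apply closed_dist_to_zero_accumulation; auto|exact Hd].
Qed.

Section RelaxedProxGaussNewton.

Variables (N M : nat) (F : vec N -> ereal) (A : vec N -> vec M) (DA : vec N -> Fin.t M -> vec N).
Variables (J0 B d C infF Amax beta eps w : R).

Hypothesis HFconv : convex_fun F.
Hypothesis HFlsc : lsc F.
Hypothesis HA : C1_on (dom F) A DA.
Hypothesis Hlev : forall x, ele (Jfun A F x) (Some J0) -> vnorm x <= B.
Hypothesis HinfF : forall x a, F x = Some a -> infF <= a.
Hypothesis HAmax : forall x, dom F x -> vnorm (A x) <= Amax.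
Hypothesis Htaylor : forall y, ele (Jfun A F y) (Some J0) ->
  forall x, vnorm (vsub x y) <= d -> vnorm (vsub (A x) (linA A DA y x)) <= C * vnorm (vsub x y) ^ 2.
Hypothesis Hbeta : 0 < beta.
Hypothesis Heps : 0 < eps.
Hypothesis Hw : 0 < w <= 1.
Hypothesis Hw_radius : w * sqrt (2 / beta * (J0 - infF)) <= d.
Hypothesis Hw_curvature : 2 * C * Amax * w <= beta - eps.

Lemma prox_step_sq_le (y x : vec N) :
  Jreal A F y <= J0 -> dom F x -> prox_model A DA beta y x + fval F x <= Jreal A F y ->
  vnorm (vsub x y) ^ 2 <= 2 / beta * (J0 - infF).
Proof.
  intros HyJ Hx Hmodel. unfold prox_model in Hmodel.
  pose proof (HinfF x _ (dom_fval F x Hx)).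
  pose proof (pow2_ge_0 (vnorm (linA A DA y x))).
  apply (Rmult_le_reg_l (beta / 2)); [lra|].
  replace (beta / 2 * (2 / beta * (J0 - infF))) with (J0 - infF) by (field; lra). lra.
Qed.

Lemma relaxed_step_decrease (y x : vec N) :
  dom F y -> Jreal A F y <= J0 -> dom F x -> prox_model A DA beta y x + fval F x <= Jreal A F y ->
  dom F (relax w y x) /\
  Jreal A F (relax w y x) <= Jreal A F y - w * eps / 2 * vnorm (vsub x y) ^ 2.
Proof.
  intros Hy HyJ Hx Hmodel.
  set (y' := relax w y x). set (de := vnorm (vsub x y)).
  assert (Hde0 : 0 <= de) by apply vnorm_nonneg.
  destruct (convex_fun_relax F w y x HFconv ltac:(lra) Hy Hx) as [Hy' HFy']. fold y' in Hy', HFy'.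
  split; [exact Hy'|].
  assert (Hstep : vnorm (vsub y' y) = w * de)
    by (unfold y'; rewrite relax_sub, vnorm_scal, Rabs_pos_eq by lra; reflexivity).
  assert (Hradius : vnorm (vsub y' y) <= d).
  { rewrite Hstep. apply Rle_trans with (w * sqrt (2 / beta * (J0 - infF))); [|exact Hw_radius].
    apply Rmult_le_compat_l; [lra|]. rewrite <- (sqrt_pow2 de Hde0).
    apply sqrt_le_1_alt. apply prox_step_sq_le; auto. }
  assert (Htay : vnorm (vsub (A y') (linA A DA y y')) <= C * (w * de) ^ 2).
  { rewrite <- Hstep. apply Htaylor; [rewrite Jfun_Jreal by exact Hy; exact HyJ|exact Hradius]. }
  assert (Hsq : 1/2 * vnorm (A y') ^ 2 <=
                (1 - w) * (1/2 * vnorm (A y) ^ 2) + w * (1/2 * vnorm (linA A DA y x) ^ 2) + C * (w * de) ^ 2 * Amax).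
  { pose proof (halfsq_sub_le (A y') (linA A DA y y')) as Hdiff.
    pose proof (halfsq_convex (A y) (linA A DA y x) w ltac:(lra)) as Hcx.
    rewrite <- linA_relax in Hcx. fold y' in Hcx.
    assert (vnorm (vsub (A y') (linA A DA y y')) * vnorm (A y') <= C * (w * de) ^ 2 * Amax)
      by (apply Rmult_le_compat; auto using vnorm_nonneg).
    lra. }
  assert (Hcurv : C * (w * de) ^ 2 * Amax <= w * (beta - eps) / 2 * de ^ 2).
  { replace (C * (w * de) ^ 2 * Amax) with ((2 * C * Amax * w) * (w * de ^ 2 / 2)) by field.
    replace (w * (beta - eps) / 2 * de ^ 2) with ((beta - eps) * (w * de ^ 2 / 2)) by field.
    apply Rmult_le_compat_r; [|exact Hw_curvature]. pose proof (pow2_ge_0 de). nra. }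
  unfold prox_model in Hmodel. fold de in Hmodel.
  assert (Hwm := Rmult_le_compat_l w _ _ ltac:(lra) Hmodel).
  unfold Jreal in *. lra.
Qed.

Variables z xt e : nat -> vec N.

Hypothesis Hz0 : Jfun A F (z 0%nat) = Some J0.
Hypothesis Hiter : forall k, z (S k) = relax w (z k) (xt k).
Hypothesis He : forall k, subdiff (Jtilde A DA F beta (z k)) (xt k) (e k).
Hypothesis He0 : vcv e vzero.
Hypothesis Hcase : forall k,
  ele (Jtilde A DA F beta (z k) (xt k)) (Jtilde A DA F beta (z k) (z k)) \/ xt k = z k.

Lemma prox_point_dom k : dom F (xt k).
Proof. exact (proj1 (subdiff_Jtilde A DA F beta (z k) (xt k) (e k) (He k))). Qed.

Lemma prox_point_model_le k :
  dom F (z k) -> prox_model A DA beta (z k) (xt k) + fval F (xt k) <= Jreal A F (z k).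
Proof.
  intros Hz. destruct (Hcase k) as [Hle|Heq].
  - rewrite (Jtilde_val A DA F beta _ _ (prox_point_dom k)), (Jtilde_val A DA F beta _ _ Hz) in Hle.
    simpl in Hle. rewrite prox_model_self in Hle. exact Hle.
  - rewrite Heq, prox_model_self. unfold Jreal. lra.
Qed.

Lemma iterates_sublevel k : dom F (z k) /\ Jreal A F (z k) <= J0.
Proof.
  induction k as [|k [Hz HzJ]].
  - apply Jfun_some in Hz0 as [Hd HJ]. split; [exact Hd|lra].
  - rewrite Hiter.
    destruct (relaxed_step_decrease _ _ Hz HzJ (prox_point_dom k) (prox_point_model_le k Hz)) as [Hd Hdec].
    split; [exact Hd|]. pose proof (pow2_ge_0 (vnorm (vsub (xt k) (z k)))).
    assert (0 <= w * eps / 2) by (pose proof (Rmult_lt_0_compat w eps (proj1 Hw) Heps); lra). nra.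
Qed.

Lemma Jreal_iterates_decrease k :
  Jreal A F (z (S k)) <= Jreal A F (z k) - w * eps / 2 * vnorm (vsub (xt k) (z k)) ^ 2.
Proof.
  destruct (iterates_sublevel k) as [Hz HzJ]. rewrite Hiter.
  exact (proj2 (relaxed_step_decrease _ _ Hz HzJ (prox_point_dom k) (prox_point_model_le k Hz))).
Qed.

Lemma Jreal_iterates_nonincreasing k : Jreal A F (z (S k)) <= Jreal A F (z k).
Proof.
  pose proof (Jreal_iterates_decrease k). pose proof (pow2_ge_0 (vnorm (vsub (xt k) (z k)))).
  assert (0 <= w * eps / 2) by (pose proof (Rmult_lt_0_compat w eps (proj1 Hw) Heps); lra). nra.
Qed.

Lemma iterates_bounded k : vnorm (z k) <= B.
Proof.
  destruct (iterates_sublevel k) as [Hz HzJ]. apply Hlev. rewrite Jfun_Jreal by exact Hz. exact HzJ.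
Qed.

Lemma Jreal_iterates_cv : {L | Un_cv (fun k => Jreal A F (z k)) L}.
Proof.
  apply decreasing_cv; [intros k; apply Jreal_iterates_nonincreasing|].
  exists (- infF). intros r [k ->]. unfold opp_seq, Jreal.
  pose proof (HinfF _ _ (dom_fval F _ (proj1 (iterates_sublevel k)))).
  pose proof (pow2_ge_0 (vnorm (A (z k)))). lra.
Qed.

Section Limit.

Variable L : R.
Hypothesis HL : Un_cv (fun k => Jreal A F (z k)) L.

Lemma prox_steps_vanish : Un_cv (fun k => vnorm (vsub (xt k) (z k))) 0.
Proof.
  intros r Hr. assert (Hc : 0 < w * eps / 2) by (pose proof (Rmult_lt_0_compat w eps (proj1 Hw) Heps); lra).
  assert (Hr' : 0 < w * eps / 2 * r ^ 2 / 2) by (pose proof (pow_lt r 2 Hr); nra).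
  destruct (HL _ Hr') as [K HK]. exists K. intros k Hk.
  pose proof (HK k Hk) as H1. pose proof (HK (S k) ltac:(lia)) as H2. unfold Rdist in *.
  rewrite Rminus_0_r, Rabs_pos_eq by apply vnorm_nonneg.
  pose proof (Rle_abs (Jreal A F (z k) - L)). pose proof (Rle_abs (- (Jreal A F (z (S k)) - L))).
  rewrite Rabs_Ropp in *. pose proof (Jreal_iterates_decrease k).
  assert (Hsq : vnorm (vsub (xt k) (z k)) ^ 2 < r ^ 2).
  { apply (Rmult_lt_reg_l (w * eps / 2)); [exact Hc|]. lra. }
  pose proof (vnorm_nonneg (vsub (xt k) (z k))). nra.
Qed.

Lemma iterate_steps_vanish : Un_cv (fun k => vnorm (vsub (z (S k)) (z k))) 0.
Proof.
  apply CV_ext with (fun k => w * vnorm (vsub (xt k) (z k))).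
  - intros k. rewrite Hiter, relax_sub, vnorm_scal, Rabs_pos_eq by lra. reflexivity.
  - replace 0 with (w * 0) by ring. apply CV_mult; [apply CV_const|exact prox_steps_vanish].
Qed.

Section Accumulation.

Variables (phi : nat -> nat) (x : vec N).
Hypothesis Hphi : forall j, (j <= phi j)%nat.
Hypothesis Hzx : vcv (fun j => z (phi j)) x.

Lemma subseq_limit_dom : dom F x.
Proof.
  apply (lsc_dom_lim F (fun j => z (phi j)) x J0 HFlsc Hzx). intros j.
  destruct (iterates_sublevel (phi j)) as [Hz HzJ]. split; [exact Hz|].
  unfold Jreal in HzJ. pose proof (pow2_ge_0 (vnorm (A (z (phi j))))). lra.
Qed.

Lemma prox_points_subseq_cv : vcv (fun j => xt (phi j)) x.
Proof. apply (vcv_of_close (fun j => z (phi j))); [exact Hzx|]. exact (CV_subseq _ 0 phi Hphi prox_steps_vanish). Qed.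

Definition prox_bound k y :=
  prox_model A DA beta (z k) y + fval F y - prox_model A DA beta (z k) (xt k) - vdot (e k) (vsub y (xt k)).

Lemma fval_prox_point_le k y : dom F y -> fval F (xt k) <= prox_bound k y.
Proof.
  intros Hy. pose proof (proj2 (subdiff_Jtilde A DA F beta (z k) (xt k) (e k) (He k)) y Hy).
  unfold prox_bound. lra.
Qed.

Lemma prox_bound_subseq_cv y :
  Un_cv (fun j => prox_bound (phi j) y) (prox_model A DA beta x y + fval F y - 1/2 * vnorm (A x) ^ 2).
Proof.
  pose proof subseq_limit_dom as Hx.
  assert (Hdz : forall j, dom F (z (phi j))) by (intros j; apply iterates_sublevel).
  pose proof prox_points_subseq_cv as Hxt.
  assert (Hmodel : forall t s, vcv s t -> Un_cv (fun j => prox_model A DA beta (z (phi j)) (s j)) (prox_model A DA beta x t)).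
  { intros t s Hs. apply CV_plus; apply CV_scal_sqnorm.
    - apply (C1_vcv_linA (dom F)); auto.
    - apply vcv_sub; auto. }
  rewrite <- (prox_model_self A DA beta x).
  replace (prox_model A DA beta x y + fval F y - prox_model A DA beta x x)
    with (prox_model A DA beta x y + fval F y - prox_model A DA beta x x - vdot vzero (vsub y x))
    by (rewrite vdot_sym, vdot_zero_r; ring).
  apply CV_minus; [apply CV_minus; [apply CV_plus|]|].
  - apply Hmodel, vcv_const.
  - apply CV_const.
  - apply Hmodel, Hxt.
  - apply CV_vdot; [apply vcv_subseq; auto|apply vcv_sub; [apply vcv_const|exact Hxt]].
Qed.

Lemma subseq_limit_prox_optimal y : dom F y ->
  fval F x + 1/2 * vnorm (A x) ^ 2 <= fval F y + prox_model A DA beta x y.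
Proof.
  intros Hy.
  pose proof (lsc_le_lim F (fun j => xt (phi j)) x _ _ HFlsc subseq_limit_dom prox_points_subseq_cv
                (fun j => prox_point_dom (phi j)) (fun j => fval_prox_point_le (phi j) y Hy)
                (prox_bound_subseq_cv y)).
  lra.
Qed.

Lemma subseq_limit_critical : clarke_critical A DA F x.
Proof.
  exists (vscal (-1) (jacT_apply DA x (A x))). split.
  - apply (prox_linear_stationary F DA (A x) x beta HFconv Hbeta subseq_limit_dom).
    intros y Hy. pose proof (subseq_limit_prox_optimal y Hy). unfold prox_model, linA in H. lra.
  - vec_ext.
Qed.

Lemma fval_iterates_subseq_cv (psi : nat -> nat) :
  (forall j, (j <= psi j)%nat) -> vcv (fun j => z (psi j)) x ->
  Un_cv (fun j => fval F (z (psi j))) (L - 1/2 * vnorm (A x) ^ 2).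
Proof.
  intros Hpsi Hzpsi.
  apply CV_ext with (fun j => Jreal A F (z (psi j)) - 1/2 * vnorm (A (z (psi j))) ^ 2);
    [intros j; unfold Jreal; ring|].
  apply CV_minus; [exact (CV_subseq _ L psi Hpsi HL)|].
  apply CV_scal_sqnorm. apply (C1_vcv_A (dom F) A DA x _ HA subseq_limit_dom Hzpsi).
Qed.

(* F(z^{k+1}) <= (1-w) F(z^k) + w F(x^k) and F(x^k) is eventually at most F(x) + o(1);
   in the limit l <= (1-w) l + w F(x), while lower semicontinuity gives F(x) <= l. *)
Lemma subseq_limit_value : Jfun A F x = Some L.
Proof.
  pose proof subseq_limit_dom as Hx.
  set (l := L - 1/2 * vnorm (A x) ^ 2).
  assert (Hz1x : vcv (fun j => z (S (phi j))) x)
    by (apply (vcv_of_close (fun j => z (phi j))); [exact Hzx|exact (CV_subseq _ 0 phi Hphi iterate_steps_vanish)]).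
  assert (Hle1 : l <= (1 - w) * l + w * fval F x).
  { apply (Rle_cv_lim (Un := fun j => fval F (z (S (phi j))))
             (Vn := fun j => (1 - w) * fval F (z (phi j)) + w * prox_bound (phi j) x)).
    - intros j. rewrite Hiter.
      pose proof (convex_fun_relax F w _ _ HFconv ltac:(lra) (proj1 (iterates_sublevel (phi j))) (prox_point_dom (phi j))) as [_ Hcv].
      pose proof (fval_prox_point_le (phi j) x Hx).
      assert (w * fval F (xt (phi j)) <= w * prox_bound (phi j) x) by (apply Rmult_le_compat_l; lra).
      lra.
    - apply (fval_iterates_subseq_cv (fun j => S (phi j))); [intros j; specialize (Hphi j); lia|exact Hz1x].
    - replace (fval F x) with (prox_model A DA beta x x + fval F x - 1/2 * vnorm (A x) ^ 2)
        by (rewrite prox_model_self; ring).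
      apply CV_plus; apply CV_mult; try apply CV_const.
      + exact (fval_iterates_subseq_cv phi Hphi Hzx).
      + apply prox_bound_subseq_cv. }
  assert (Hle2 : fval F x <= l).
  { apply (lsc_le_lim F (fun j => z (phi j)) x (fun j => fval F (z (phi j))) l HFlsc Hx Hzx).
    - intros j; apply iterates_sublevel.
    - intros j; lra.
    - exact (fval_iterates_subseq_cv phi Hphi Hzx). }
  assert (fval F x = l) by (pose proof (proj2 Hw); nra).
  rewrite Jfun_Jreal by exact Hx. f_equal. unfold Jreal, l in *. lra.
Qed.

End Accumulation.

Lemma accumulation_point_critical_value x : accumulation_point z x ->
  dom F x /\ clarke_critical A DA F x /\ Jfun A F x = Some L.
Proof.
  intros Hx. destruct (accumulation_point_subseq z x Hx) as [phi [Hphi Hzx]].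
  pose proof (strict_incr_ge phi Hphi) as Hge.
  split; [|split].
  - exact (subseq_limit_dom phi x Hzx).
  - exact (subseq_limit_critical phi x Hge Hzx).
  - exact (subseq_limit_value phi x Hge Hzx).
Qed.

End Limit.

Lemma relaxed_prox_gauss_newton_convergence :
  exists L : R,
    (exists u : nat -> R, (forall k, Jfun A F (z k) = Some (u k)) /\
        (forall k, u (S k) <= u k) /\ Un_cv u L) /\
    (forall x, accumulation_point z x -> clarke_critical A DA F x /\ Jfun A F x = Some L) /\
    (forall U1 U2 : vec N -> Prop,
        closed_vset U1 -> closed_vset U2 -> (forall x, ~ (U1 x /\ U2 x)) ->
        (forall x, (dom F x /\ clarke_critical A DA F x /\ Jfun A F x = Some L) <-> (U1 x \/ U2 x)) ->
        ((forall x, accumulation_point z x -> U1 x) /\ dist_to_zero z U1) \/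
        ((forall x, accumulation_point z x -> U2 x) /\ dist_to_zero z U2)).
Proof.
  destruct Jreal_iterates_cv as [L HL]. exists L. split; [|split].
  - exists (fun k => Jreal A F (z k)). split; [|split; [exact Jreal_iterates_nonincreasing|exact HL]].
    intros k. apply Jfun_Jreal, iterates_sublevel.
  - intros x Hx. apply (accumulation_point_critical_value L HL x Hx).
  - intros U1 U2 HU1 HU2 Hdisj HV.
    apply (approaches_one_component z U1 U2 B iterates_bounded (iterate_steps_vanish L HL) HU1 HU2 Hdisj).
    intros x Hx. apply HV, (accumulation_point_critical_value L HL x Hx).
Qed.

End RelaxedProxGaussNewton.

(* Properness of F follows from z0 in dom F. *)
Theorem theorem2p1 (N M : nat) (F : vec N -> ereal) (A : vec N -> vec M)
  (DA : vec N -> Fin.t M -> vec N)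
  (HFconv : convex_fun F) (HFprop : proper F) (HFlsc : lsc F)
  (HA : C1_on (dom F) A DA)
  (z0 : vec N) (Hz0 : dom F z0)
  (d C infF Amax : R) (Hd : 0 < d) (HC : 0 < C)
  (* Assumption 2.1 *)
  (Hlev : exists B, forall x, ele (Jfun A F x) (Jfun A F z0) -> vnorm x <= B)
  (HinfF : (forall x a, F x = Some a -> infF <= a) /\
           (forall m, (forall x a, F x = Some a -> m <= a) -> m <= infF))
  (HAmax : is_lub (fun r => exists z, dom F z /\ r = vnorm (A z)) Amax)
  (Htaylor : forall y, ele (Jfun A F y) (Jfun A F z0) ->
     forall x, vnorm (vsub x y) <= d ->
       vnorm (vsub (A x) (linA A DA y x)) <= C * vnorm (vsub x y) ^ 2)
  (beta eps w : R) (Hbeta : 0 < beta) (Heps : 0 < eps < beta)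
  (Hw0 : 0 < w) (Hw1 : w <= 1)
  (Hw2 : forall J0, Jfun A F z0 = Some J0 ->
           w * sqrt (2 / beta * (J0 - infF)) <= d)
  (Hw3 : 2 * C * Amax * w <= beta - eps)
  (z xt e : nat -> vec N)
  (Hzinit : z 0%nat = z0)
  (Hiter : forall k, z (S k) = vadd (vscal (1 - w) (z k)) (vscal w (xt k)))
  (He : forall k, subdiff (Jtilde A DA F beta (z k)) (xt k) (e k))
  (He0 : forall r, 0 < r -> exists K, forall k, (K <= k)%nat -> vnorm (e k) < r)
  (Hcase : forall k,
     (ele (Jtilde A DA F beta (z k) (xt k)) (Jtilde A DA F beta (z k) (z k))
        /\ xt k <> z k)
     \/ (xt k = z k /\ subdiff (Jtilde A DA F beta (z k)) (z k) vzero)) :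
  exists L : R,
    (* (i) *)
    (exists u : nat -> R, (forall k, Jfun A F (z k) = Some (u k)) /\
        (forall k, u (S k) <= u k) /\ Un_cv u L) /\
    (* (ii) *)
    (forall xh, accumulation_point z xh ->
        clarke_critical A DA F xh /\ Jfun A F xh = Some L) /\
    (* (iii) *)
    (forall U1 U2 : vec N -> Prop,
        closed_vset U1 -> closed_vset U2 -> (forall x, ~ (U1 x /\ U2 x)) ->
        (forall x, (dom F x /\ clarke_critical A DA F x /\ Jfun A F x = Some L)
                   <-> (U1 x \/ U2 x)) ->
        ((forall xh, accumulation_point z xh -> U1 xh) /\ dist_to_zero z U1) \/
        ((forall xh, accumulation_point z xh -> U2 xh) /\ dist_to_zero z U2)).
Proof.
  destruct Hlev as [B HB].
  pose proof (Jfun_Jreal A F z0 Hz0) as HJ0.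
  rewrite HJ0 in HB, Htaylor.
  assert (HAb : forall x, dom F x -> vnorm (A x) <= Amax) by (intros x Hx; apply HAmax; exists x; auto).
  assert (Hecv : vcv e vzero).
  { intros r Hr. destruct (He0 r Hr) as [K HK]. exists K. intros k Hk. rewrite vsub_zero_r. auto. }
  assert (Hcase' : forall k,
            ele (Jtilde A DA F beta (z k) (xt k)) (Jtilde A DA F beta (z k) (z k)) \/ xt k = z k)
    by (intros k; destruct (Hcase k) as [[Hle _]|[Heq _]]; auto).
  subst z0.
  exact (relaxed_prox_gauss_newton_convergence N M F A DA _ B d C infF Amax beta eps w
           HFconv HFlsc HA HB (proj1 HinfF) HAb Htaylor Hbeta (proj1 Heps) (conj Hw0 Hw1)
           (Hw2 _ HJ0) Hw3 z xt e HJ0 Hiter He Hecv Hcase').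
Qed.
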